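(* Let $n$ be even, $1\le q_n\le n/2$, $I_n=\{(i_1,\dots,i_{q_n}):1\le i_1<\dots<i_{q_n}\le n\}$, and for $R=(i_1,\dots,i_{q_n})\in I_n$ let $\Psi_R=\psi_{i_1}\cdots\psi_{i_{q_n}}\,i^{\lfloor q_n/2\rfloor}$. Let $\pi\in\mathcal{P}_2(k)$ and set $$S(\pi,n):=\frac{1}{|I_n|^{k/2}}\sum_{\substack{\alpha:[k]\to I_n\\ \ker\alpha\ge\pi}}\operatorname{tr}(\Psi_{\alpha(1)}\cdots\Psi_{\alpha(k)}).$$ Let $V$ be a block of $\pi$ and $R\in I_n$. Then $$\frac{1}{|I_n|^{(k-2)/2}}\sum_{\substack{\alpha:[k]\to I_n\\ \ker\alpha\ge\pi\\ \alpha(V)=R}}\operatorname{tr}(\Psi_{\alpha(1)}\cdots\Psi_{\alpha(k)})=S(\pi,n);$$ in particular this restricted sum does not depend on the choice of the block $V$ nor of the value $R$.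
   Context: $\psi_1,\dots,\psi_n$ are Majorana fermions: $2^{n/2}\times2^{n/2}$ matrices with $\psi_i\psi_j+\psi_j\psi_i=2\delta_{ij}I$, realized as $\psi_j=\sigma_3^{\otimes(j-1)}\otimes\sigma_1\otimes 1^{\otimes(n/2-j)}$, $\psi_{n/2+j}=\sigma_3^{\otimes(j-1)}\otimes\sigma_2\otimes 1^{\otimes(n/2-j)}$ with Pauli matrices. $\operatorname{tr}$ is the normalized trace. $\mathcal{P}_2(k)$ is the set of pair partitions of $[k]=\{1,\dots,k\}$; $\ker\alpha$ is the partition of $[k]$ into the nonempty level sets of $\alpha$; $\pi\le\sigma$ means each block of $\pi$ lies in a block of $\sigma$; for a block $V$ of $\pi\le\ker\alpha$, $\alpha(V)$ is the common value of $\alpha$ on $V$. *)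

From HB Require Import structures.
From mathcomp Require Import all_boot all_order all_algebra all_field.
From mathcomp Require Import mxtens.
Set Implicit Arguments. Unset Strict Implicit. Unset Printing Implicit Defensive.
Import Order.TTheory GRing.Theory Num.Theory.
Local Open Scope ring_scope.

Definition sigma1 : 'M[algC]_2 := \matrix_(i < 2, j < 2) (if i == j then 0 else 1).
Definition sigma2 : 'M[algC]_2 :=
  \matrix_(i < 2, j < 2) (if i == j then 0 else if i == 0 then - 'i else 'i).
Definition sigma3 : 'M[algC]_2 :=
  \matrix_(i < 2, j < 2) (if i == j then (if i == 0 then 1 else -1) else 0).

Lemma jw_dim (m j : nat) : (j < m)%N -> (2 ^ j * 2 * 2 ^ (m - j.+1) = 2 ^ m)%N.
Proof.
move=> h; rewrite -expnSr -expnD; congr (_ ^ _)%N.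
by rewrite addSn -addnS subnSK ?subnKC // ltnW.
Qed.

(* Jordan-Wigner string  sigma3^{(x) j} (x) s (x) 1^{(x) (m-j-1)}  (0-based j),
   a 2^m x 2^m matrix (0 if j >= m, never used). *)
Definition jw (m j : nat) (s : 'M[algC]_2) : 'M[algC]_(2 ^ m) :=
  match ltnP j m with
  | LtnNotGeq h => castmx (jw_dim h, jw_dim h)
                     (sigma3 ^t j *t s *t (1%:M : 'M[algC]_2) ^t (m - j.+1))
  | GeqNotLtn _ => 0
  end.

(* Majorana fermions psi_1..psi_n (here 0-based: psi 0 .. psi (n-1)), n even,
   psi_{j} = jw with sigma1 at site j, psi_{n/2+j} = jw with sigma2 at site j. *)
Definition psi (n : nat) (i : 'I_n) : 'M[algC]_(2 ^ n./2) :=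
  if (i < n./2)%N then jw n./2 i sigma1 else jw n./2 (i - n./2) sigma2.

Definition ntr (m : nat) (A : 'M[algC]_(2 ^ m)) : algC := \tr A / (2 ^ m)%:R.

(* I_n: increasing q-tuples of [n], represented as q-element subsets of 'I_n *)
Definition Iset (n q : nat) : {set {set 'I_n}} := [set R : {set 'I_n} | #|R| == q].

(* Psi_R = psi_{i_1} ... psi_{i_q} * i^{floor(q/2)}, i_1 < ... < i_q the
   elements of R in increasing order (enum of a set of ordinals is increasing) *)
Definition Psi (n q : nat) (R : {set 'I_n}) : 'M[algC]_(2 ^ n./2) :=
  (\prod_(i <- enum R) psi i) * ('i ^+ q./2)%:M.

Definition pair_partition (k : nat) (P : {set {set 'I_k}}) : bool :=
  partition P [set: 'I_k] && [forall B in P, #|B| == 2%N].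

Definition ker_ge (k : nat) (T : eqType) (a : 'I_k -> T) (P : {set {set 'I_k}}) : bool :=
  [forall B in P, [forall x in B, [forall y in B, a x == a y]]].

Definition trPsi (n q k : nat) (a : {ffun 'I_k -> {set 'I_n}}) : algC :=
  ntr (\prod_(j < k) Psi q (a j)).

Definition S (n q k : nat) (P : {set {set 'I_k}}) : algC :=
  ((#|Iset n q|%:R : algC) ^+ k./2)^-1 *
  \sum_(a : {ffun 'I_k -> {set 'I_n}} |
          [forall j, a j \in Iset n q] && ker_ge a P) trPsi q a.

(* The Majorana matrices satisfy the Clifford relations psi_i ^ 2 = 1 and
   psi_i psi_j = - psi_j psi_i for i <> j; in the Jordan-Wigner representation they
   are signed permutation matrices acting on the binary digits of the indices.
   For an even number of generators these relations alone make the trace of a word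
   in the psi_i invariant under any injective relabelling of its letters: if some
   letter anticommutes with an odd number of letters of the word, cyclicity of the
   trace forces the trace to vanish; otherwise the word is empty or has a repeated
   letter, which cancels at the cost of the same sign before and after relabelling.
   Hence, for a permutation s of [n], replacing each Psi_{alpha(j)} by
   Psi_{s(alpha(j))} only changes the j-th factor by the sign of sorting
   s(alpha(j)) increasingly, and as alpha is constant on the pairs of pi these signs
   occur squared. Since a permutation moves any R in I_n to any other, the
   restricted sum does not depend on R, and summing it over R gives
   |I_n|^{k/2} S(pi, n). *)

From HB Require Import structures.
From mathcomp Require Import all_boot all_order all_algebra all_field.
From mathcomp Require Import mxtens perm.
From mathcomp Require Import zify ring.
Set Implicit Arguments. Unset Strict Implicit. Unset Printing Implicit Defensive.
Import Order.TTheory GRing.Theory Num.Theory.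
Local Open Scope ring_scope.

Section BinaryDigits.
Local Open Scope nat_scope.
Implicit Types (r i x y h l : nat) (b : bool).

Definition bitn r x : bool := odd (x %/ 2 ^ r).
Definition hibits r x := x %/ 2 ^ r.+1.
Definition lobits r x := x %% 2 ^ r.
Definition joinbits r h b l := h * 2 ^ r.+1 + b * 2 ^ r + l.
Definition flipbit r x := joinbits r (hibits r x) (~~ bitn r x) (lobits r x).

Lemma hibitsE r x : hibits r x = x %/ 2 ^ r %/ 2.
Proof. by rewrite /hibits expnSr divnMA. Qed.

Lemma joinbitsK r x : joinbits r (hibits r x) (bitn r x) (lobits r x) = x.
Proof.
rewrite /joinbits hibitsE /bitn /lobits [RHS](divn_eq x (2 ^ r)) expnS.
by rewrite mulnA -mulnDl -modn2 -divn_eq.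
Qed.

Lemma lobits_lt r x : lobits r x < 2 ^ r.
Proof. by rewrite ltn_mod expn_gt0. Qed.

Lemma joinbitsE r h b l : joinbits r h b l = (h * 2 + b) * 2 ^ r + l.
Proof. by rewrite /joinbits expnS; ring. Qed.

Section JoinBits.
Variables (r h l : nat) (b : bool).
Hypothesis l_lt : l < 2 ^ r.

Lemma joinbits_divn : joinbits r h b l %/ 2 ^ r = h * 2 + b.
Proof. by rewrite joinbitsE divnMDl ?expn_gt0 // divn_small // addn0. Qed.

Lemma lobits_join : lobits r (joinbits r h b l) = l.
Proof. by rewrite joinbitsE /lobits modnMDl modn_small. Qed.

Lemma bitn_join : bitn r (joinbits r h b l) = b.
Proof. by rewrite /bitn joinbits_divn oddD oddM andbF; case: b. Qed.

Lemma hibits_join : hibits r (joinbits r h b l) = h.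
Proof. by rewrite hibitsE joinbits_divn divnMDl // divn_small ?addn0 //; case: b. Qed.

End JoinBits.

Lemma eq_bitsE r x y :
  (x == y) = [&& hibits r x == hibits r y, bitn r x == bitn r y & lobits r x == lobits r y].
Proof.
apply/eqP/and3P => [-> //|[/eqP eh /eqP eb /eqP el]].
by rewrite -(joinbitsK r x) -(joinbitsK r y) eh eb el.
Qed.

Lemma bitn_hibits r i x : r < i -> bitn i x = bitn (i - r.+1) (hibits r x).
Proof. by move=> lt_ri; rewrite /bitn /hibits -divnMA -expnD subnKC. Qed.

Lemma bitn_lobits r i x : i < r -> bitn i x = bitn i (lobits r x).
Proof.
move=> lt_ir; rewrite /bitn /lobits {1}(divn_eq x (2 ^ r)).
rewrite -(subnK (ltnW lt_ir)) expnD mulnA divnMDl ?expn_gt0 // oddD oddM.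
by rewrite oddX subn_eq0 leqNgt lt_ir andbF.
Qed.

Lemma bitn_inj x y : (forall i, bitn i x = bitn i y) -> x = y.
Proof.
have [N] := ubnPleq (x + y); elim: N x y => [|N IH] x y le_xy eq_xy.
  by have [-> ->] : x = 0 /\ y = 0 by lia.
apply/eqP; rewrite (eq_bitsE 0) eq_xy /lobits !modn1 eqxx andbT /=.
apply/eqP/IH => [|i]; first by rewrite !hibitsE !expn0 !divn1; lia.
by have := eq_xy i.+1; rewrite !(bitn_hibits _ (ltn0Sn i)) subSS subn0.
Qed.

Lemma hibits_flip r x : hibits r (flipbit r x) = hibits r x.
Proof. exact/hibits_join/lobits_lt. Qed.

Lemma lobits_flip r x : lobits r (flipbit r x) = lobits r x.
Proof. exact/lobits_join/lobits_lt. Qed.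

Lemma bitn_flip r x : bitn r (flipbit r x) = ~~ bitn r x.
Proof. exact/bitn_join/lobits_lt. Qed.

Lemma bitn_flip_neq r i x : i != r -> bitn i (flipbit r x) = bitn i x.
Proof.
rewrite neq_ltn => /orP[lt_ir|lt_ri].
  by rewrite (bitn_lobits x lt_ir) (bitn_lobits _ lt_ir) lobits_flip.
by rewrite (bitn_hibits x lt_ri) (bitn_hibits _ lt_ri) hibits_flip.
Qed.

Lemma flipbitK r : involutive (flipbit r).
Proof. by move=> x; rewrite {1}/flipbit hibits_flip lobits_flip bitn_flip negbK joinbitsK. Qed.

Lemma flipbitC r r' x : flipbit r (flipbit r' x) = flipbit r' (flipbit r x).
Proof.
apply: bitn_inj => i.
have [<-|ir] := eqVneq i r; have [<-|ir'] := eqVneq i r'; rewrite ?bitn_flip //.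
- by rewrite !(bitn_flip_neq _ ir') bitn_flip.
- by rewrite !(bitn_flip_neq _ ir) bitn_flip.
- by rewrite !bitn_flip_neq.
Qed.

Lemma eq_flipbitE r x y :
  (y == flipbit r x) =
  [&& hibits r y == hibits r x, bitn r y != bitn r x & lobits r y == lobits r x].
Proof. by rewrite (eq_bitsE r) hibits_flip lobits_flip bitn_flip; case: (bitn r y). Qed.

Lemma flipbit_lt m r x : r < m -> x < 2 ^ m -> flipbit r x < 2 ^ m.
Proof.
move=> lt_rm lt_xm; have lt_l := lobits_lt r x.
have lt_h : hibits r x < 2 ^ (m - r.+1) by rewrite ltn_divLR ?expn_gt0 // -expnD subnK.
rewrite /flipbit /joinbits -(subnK lt_rm) expnD !expnS.
move: lt_h lt_l; move: (hibits r x) (lobits r x) (2 ^ r) (2 ^ (m - r.+1)) => h l p p'.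
by case: (~~ bitn r x) => /=; nia.
Qed.

End BinaryDigits.

Section MonomialMatrices.
Variables (R : pzRingType) (N : nat).
Implicit Types (f g : nat -> nat) (c d : nat -> R).

Definition monomx f c : 'M[R]_N := \matrix_(i, j) ((j == f i :> nat)%:R * c i).

Lemma mul_monomx f g c d : (forall x, x < N -> f x < N)%N ->
  monomx f c * monomx g d = monomx (g \o f) (fun x => c x * d (f x)).
Proof.
move=> f_lt; apply/matrixP => i j; rewrite -mulmxE !mxE.
rewrite (bigD1 (Ordinal (f_lt i (ltn_ord i)))) //= !mxE eqxx mul1r big1 ?addr0.
  by case: (j == g (f i) :> nat); rewrite ?mul0r ?mulr0 ?mul1r.
move=> k /negbTE neq_k; rewrite !mxE.
suff -> : (k == f i :> nat) = false by rewrite !mul0r.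
by apply: contraFF neq_k => /eqP eq_k; apply/eqP/val_inj.
Qed.

Lemma eq_monomx f g c d : {in gtn N, f =1 g} -> {in gtn N, c =1 d} -> monomx f c = monomx g d.
Proof. by move=> eq_f eq_c; apply/matrixP => i j; rewrite !mxE eq_f ?eq_c ?inE. Qed.

Lemma monomx1 : monomx id (fun=> 1) = 1.
Proof. by apply/matrixP => i j; rewrite !mxE mulr1 val_eqE eq_sym. Qed.

Lemma opp_monomx f c : - monomx f c = monomx f (fun x => - c x).
Proof. by apply/matrixP => i j; rewrite !mxE mulrN. Qed.

End MonomialMatrices.

Lemma ntensmx_diag (R : comPzRingType) (e : R) (A : 'M[R]_2) :
  (forall a b : 'I_2, A a b = (a == b)%:R * e ^+ a) ->
  forall j (x y : 'I_(2 ^ j)), (A ^t j) x y = (x == y :> nat)%:R * \prod_(i < j) e ^+ bitn i x.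
Proof.
move=> A_diag; elim=> [|[|j] IH] x y.
- by rewrite big_ord0 mulr1 ntensmx0; case: x => [[]] // ?; case: y => [[]] // ?; rewrite !mxE.
- rewrite ntensmx1 A_diag big_ord1 /bitn expn0 divn1.
  by case: x => [[|[]]] // ?.
rewrite ntensmxSS !mxE /= A_diag IH /= [in RHS]big_ord_recr /=.
set p := (2 ^ j.+1)%N.
have top_bit : (x %/ p = bitn j.+1 x)%N.
  have : (x %/ p < 2)%N by rewrite ltn_divLR ?expn_gt0 // -expnSr.
  by rewrite /bitn; case: (x %/ p)%N => [|[]].
have -> : (x == y :> nat) = (x %/ p == y %/ p)%N && (x == y %[mod p]).
  apply/eqP/andP => [-> //|[/eqP eq_div /eqP eq_mod]].
  by rewrite (divn_eq x p) (divn_eq y p) eq_div eq_mod.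
rewrite -[_ == _ :> 'I_2]/(x %/ p == y %/ p)%N top_bit.
under eq_bigr => i _ do rewrite -(bitn_lobits x (ltn_ord i)).
by case: (_ == _); case: (_ == _ %[mod _]); rewrite /= ?mul0r ?mulr0 ?mul1r // mulrC.
Qed.

Definition jwsign m r x : algC := \prod_(r.+1 <= i < m) (-1) ^+ bitn i x.

(* Site j of a Jordan-Wigner string of m factors is the binary digit r = m - j.+1
   of the row index: the off-diagonal factor, with entry g b in row b, flips that
   digit and the sigma3 factors contribute the sign of the higher digits. *)
Definition jwmx m r (g : bool -> algC) : 'M[algC]_(2 ^ m) :=
  monomx _ (flipbit r) (fun x => jwsign m r x * g (bitn r x)).

Lemma sigma3_diag (a b : 'I_2) : sigma3 a b = (a == b)%:R * (-1) ^+ a.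
Proof.
by rewrite !mxE; case: a => [[|[]]] // ?; case: b => [[|[]]] // ?; rewrite /= ?mul0r ?mul1r.
Qed.

Lemma scalar1_diag (a b : 'I_2) : (1%:M : 'M[algC]_2) a b = (a == b)%:R * 1 ^+ a.
Proof. by rewrite !mxE expr1n mulr1. Qed.

Lemma jwsign_hibits m r x : (r < m)%N ->
  jwsign m r x = \prod_(i < m - r.+1) (-1) ^+ bitn i (hibits r x).
Proof.
move=> lt_rm; rewrite /jwsign -{1}(add0n r.+1) big_addn big_mkord.
by apply: eq_bigr => i _; rewrite (@bitn_hibits r) ?addnK //; lia.
Qed.

Lemma jw_jwmx m j (s : 'M[algC]_2) (g : bool -> algC) : (j < m)%N ->
  (forall a b : 'I_2, s a b = if a == b then 0 else g (a == 1 :> nat)) ->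
  jw m j s = jwmx m (m - j.+1) g.
Proof.
move=> lt_jm s_offdiag; rewrite /jw.
case: ltnP => lt_jm'; last by move: lt_jm; rewrite ltnNge lt_jm'.
apply/matrixP => x y; rewrite castmxE !mxE /=.
rewrite (ntensmx_diag sigma3_diag) (ntensmx_diag scalar1_diag) s_offdiag -!val_eqE /=.
under [\prod_(_ < _) 1 ^+ _]eq_bigr => i _ do rewrite expr1n.
rewrite big1_eq mulr1.
set r := (m - j.+1)%N.
rewrite -!hibitsE !modn2 -/(bitn r x) -/(bitn r y) -/(lobits r x) -/(lobits r y).
rewrite eq_flipbitE (jwsign_hibits x) /r ?subnSK ?subKn; try lia.
rewrite -/r [hibits r y == _]eq_sym [lobits r y == _]eq_sym.
have -> : (bitn r x == 1 :> nat) = bitn r x by case: (bitn r x).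
by case: (hibits r x == _); case: (lobits r x == _); case: (bitn r x); case: (bitn r y);
  rewrite /= ?mul0r ?mulr0 ?mul1r ?mulr1.
Qed.

Lemma jwsign_flip_le m r r' x : (r' <= r)%N -> jwsign m r (flipbit r' x) = jwsign m r x.
Proof.
move=> le_r'r; apply: eq_big_nat => i /andP[lt_ri _].
by rewrite bitn_flip_neq // gtn_eqF // (leq_ltn_trans le_r'r).
Qed.

Lemma jwsign_flip_lt m r r' x : (r' < r < m)%N -> jwsign m r' (flipbit r x) = - jwsign m r' x.
Proof.
case/andP=> lt_r'r lt_rm; rewrite /jwsign !(@big_cat_nat _ _ _ r r'.+1 m) //; try lia.
rewrite !(@big_ltn _ _ _ r m) // bitn_flip.
have -> : \prod_(r'.+1 <= i < r) (-1) ^+ bitn i (flipbit r x) =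
          \prod_(r'.+1 <= i < r) (-1) ^+ bitn i x :> algC.
  by apply: eq_big_nat => i /andP[_ lt_ir]; rewrite bitn_flip_neq // ltn_eqF.
have -> : \prod_(r.+1 <= i < m) (-1) ^+ bitn i (flipbit r x) =
          \prod_(r.+1 <= i < m) (-1) ^+ bitn i x :> algC.
  by apply: eq_big_nat => i /andP[lt_ri _]; rewrite bitn_flip_neq // gtn_eqF.
by case: (bitn r x); rewrite /= ?expr1 ?expr0; ring.
Qed.

Lemma jwsign_sqr m r x : jwsign m r x * jwsign m r x = 1.
Proof.
rewrite /jwsign -big_split /=; apply: big1 => i _.
by rewrite -exprD -signr_odd oddD addbb.
Qed.

Lemma mul_jwmx m r g h : (r < m)%N ->
  jwmx m r g * jwmx m r h = monomx _ id (fun x => g (bitn r x) * h (~~ bitn r x)).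
Proof.
move=> lt_rm; rewrite /jwmx mul_monomx => [|x]; last exact: flipbit_lt.
apply: eq_monomx => x _ /=; first exact: flipbitK.
by rewrite jwsign_flip_le // bitn_flip mulrCA !mulrA jwsign_sqr mul1r.
Qed.

Lemma jwmx_sqr m r g : (r < m)%N -> (forall b, g b * g (~~ b) = 1) -> jwmx m r g * jwmx m r g = 1.
Proof. by move=> lt_rm g_inv; rewrite mul_jwmx // -monomx1; apply: eq_monomx. Qed.

Lemma jwmx_anticomm m r g h : (r < m)%N -> (forall b, g b * h (~~ b) = - (h b * g (~~ b))) ->
  jwmx m r g * jwmx m r h = - (jwmx m r h * jwmx m r g).
Proof. by move=> lt_rm gh_anti; rewrite !mul_jwmx // opp_monomx; apply: eq_monomx. Qed.

Lemma jwmx_anticomm_lt m r r' g h : (r' < r < m)%N ->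
  jwmx m r g * jwmx m r' h = - (jwmx m r' h * jwmx m r g).
Proof.
case/andP=> lt_r'r lt_rm; have lt_r'm := ltn_trans lt_r'r lt_rm.
rewrite /jwmx !mul_monomx => [|x|x]; try exact: flipbit_lt.
rewrite opp_monomx; apply: eq_monomx => x _ /=; first exact: flipbitC.
rewrite jwsign_flip_lt ?lt_r'r // jwsign_flip_le ?(ltnW lt_r'r) //.
by rewrite !bitn_flip_neq ?(ltn_eqF lt_r'r) ?(gtn_eqF lt_r'r) //; ring.
Qed.

Definition majorana_site n (i : nat) : nat := if (i < n./2)%N then i else (i - n./2)%N.

Definition pauli_offdiag (is_sigma2 : bool) : bool -> algC :=
  if is_sigma2 then fun b => if b then 'i else - 'i else fun=> 1.

Section MajoranaCliffordRelations.
Variable n : nat.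
Hypothesis n_even : ~~ odd n.

Lemma majorana_site_lt (i : 'I_n) : (majorana_site n i < n./2)%N.
Proof.
rewrite /majorana_site; case: ifP => // /negbT; rewrite -leqNgt.
have := odd_double_half n; rewrite (negbTE n_even) add0n -addnn.
have := ltn_ord i; lia.
Qed.

Lemma psi_jwmx (i : 'I_n) :
  psi i = jwmx n./2 (n./2 - (majorana_site n i).+1) (pauli_offdiag (n./2 <= i)%N).
Proof.
have := majorana_site_lt i; rewrite /psi /majorana_site; case: (ltnP i n./2) => [lt_i|ge_i] lt_site.
  by apply: jw_jwmx => // a b; rewrite !mxE; case: (a == b).
apply: jw_jwmx => // a b.
by rewrite !mxE; case: a => [[|[]]] // ?; case: b => [[|[]]] // ?.
Qed.

Lemma psi_sqr (i : 'I_n) : psi i * psi i = 1.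
Proof.
rewrite psi_jwmx; apply: jwmx_sqr => [|[] /=]; first by have := majorana_site_lt i; lia.
  by case: (n./2 <= i)%N; rewrite /= ?mulr1 // mulrN -expr2 sqrCi opprK.
by case: (n./2 <= i)%N; rewrite /= ?mulr1 // mulNr -expr2 sqrCi opprK.
Qed.

Lemma psi_anticomm (i j : 'I_n) : i != j -> psi i * psi j = - (psi j * psi i).
Proof.
move=> neq_ij; rewrite !psi_jwmx.
have lt_i := majorana_site_lt i; have lt_j := majorana_site_lt j.
have [lt_ij|lt_ji|eq_ij] := ltngtP (majorana_site n i) (majorana_site n j).
- by rewrite jwmx_anticomm_lt //; lia.
- by rewrite [in RHS]jwmx_anticomm_lt ?opprK //; lia.
have neq_kind : (n./2 <= i)%N != (n./2 <= j)%N.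
  apply: contraNneq neq_ij => eq_kind; apply/eqP/val_inj => /=.
  move: eq_ij eq_kind; rewrite /majorana_site; clear lt_i lt_j.
  by case: (ltnP i n./2); case: (ltnP j n./2) => //=; lia.
rewrite eq_ij jwmx_anticomm //; first lia.
move: neq_kind; case: (n./2 <= i)%N; case: (n./2 <= j)%N => //= _ [] /=;
  by rewrite ?mulr1 ?mul1r ?opprK.
Qed.

End MajoranaCliffordRelations.

Lemma scalemx_mull (R : pzRingType) N a (A B : 'M[R]_N) : a *: (A * B) = a *: A * B.
Proof. by rewrite -!mulmxE scalemxAl. Qed.

Lemma scalemx_mulr (R : comPzRingType) N a (A B : 'M[R]_N) : a *: (A * B) = A * (a *: B).
Proof. by rewrite -!mulmxE scalemxAr. Qed.

Lemma scalemx_prod (R : comPzRingType) N (I : Type) (r : seq I) (F : I -> R) (G : I -> 'M[R]_N) :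
  \prod_(i <- r) (F i *: G i) = (\prod_(i <- r) F i) *: \prod_(i <- r) G i.
Proof.
elim: r => [|x r IH]; first by rewrite !big_nil scale1r.
by rewrite !big_cons IH -scalemx_mulr -scalemx_mull scalerA [F x * _]mulrC.
Qed.

Lemma count_map_predC1 (T U : eqType) (f : T -> U) (j : T) (s : seq T) : injective f ->
  count (predC1 (f j)) (map f s) = count (predC1 j) s.
Proof. by move=> f_inj; rewrite count_map; apply: eq_count => z /=; rewrite (inj_eq f_inj). Qed.

Lemma not_uniq_split (T : eqType) (s : seq T) :
  ~~ uniq s -> exists u y t, s = u ++ y :: t /\ y \in t.
Proof.
elim: s => [//|z s IH] /=; rewrite negb_and negbK => /orP[z_s | /IH[u [y [t [-> y_t]]]]].
  by exists [::], z, s.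
by exists (z :: u), y, t.
Qed.

Lemma uniq_even_count_nil (T : finType) (s : seq T) : ~~ odd #|T| -> uniq s ->
  (forall j, ~~ odd (count (predC1 j) s)) -> s = [::].
Proof.
move=> T_even uniq_s even_count.
have count_C1 j : count (predC1 j) s = (size s - count_mem j s)%N.
  by rewrite -(count_predC (pred1 j) s) addKn.
case: s uniq_s even_count count_C1 => [//|y s] uniq_s even_count count_C1.
have odd_size : odd (size (y :: s)).
  by have := even_count y; rewrite count_C1 (count_uniq_mem _ uniq_s) mem_head subn1.
have [j j_notin] : exists j, j \notin y :: s.
  apply/existsP; apply: contraTT odd_size => /existsPn all_in.
  have le_T : (#|T| <= size (y :: s))%N.
    rewrite -(card_uniqP uniq_s); apply/subset_leq_card/subsetP => z _.
    by have := all_in z; rewrite negbK.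
  have le_s : (size (y :: s) <= #|T|)%N by rewrite -(card_uniqP uniq_s) max_card.
  by rewrite (@anti_leq (size _) #|T|) ?le_T ?le_s.
by have := even_count j; rewrite count_C1 (count_memPn j_notin) subn0 odd_size.
Qed.

Section CliffordWords.
Variables (R : numDomainType) (N : nat) (I : finType) (g : I -> 'M[R]_N).
Hypothesis g_sqr : forall i, g i * g i = 1.
Hypothesis g_anticomm : forall i j, i != j -> g i * g j = - (g j * g i).

Definition word_mx (w : seq I) : 'M[R]_N := \prod_(i <- w) g i.

Lemma word_mx_cat s t : word_mx (s ++ t) = word_mx s * word_mx t.
Proof. exact: big_cat. Qed.

Lemma word_mx_cons i w : word_mx (i :: w) = g i * word_mx w.
Proof. exact: big_cons. Qed.

Lemma prod_word_mx (J : Type) (r : seq J) (G : J -> seq I) :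
  \prod_(j <- r) word_mx (G j) = word_mx (flatten (map G r)).
Proof. by rewrite /word_mx big_flatten big_map. Qed.

Lemma mul_g_word_mx j w : g j * word_mx w = (-1) ^+ count (predC1 j) w *: (word_mx w * g j).
Proof.
elim: w => [|x w IH]; first by rewrite /word_mx big_nil scale1r mul1r mulr1.
rewrite word_mx_cons /=; have [->|neq_xj] := eqVneq x j.
  by rewrite add0n {1}IH -scalemx_mulr mulrA.
rewrite exprS -scalerA mulrA g_anticomm 1?eq_sym // mulNr -mulrA -(mulrA (g x)) IH.
by rewrite -scalemx_mulr scaleN1r.
Qed.

Lemma mul_word_mx_g j w : word_mx w * g j = (-1) ^+ count (predC1 j) w *: (g j * word_mx w).
Proof. by rewrite mul_g_word_mx scalerA -expr2 sqrr_sign scale1r. Qed.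

Lemma word_mx_perm_eq s t : perm_eq s t -> exists k, word_mx t = (-1) ^+ k *: word_mx s.
Proof.
elim: s t => [|x s IH] t eq_st.
  by move: eq_st; rewrite perm_sym => /perm_nilP ->; exists 0%N; rewrite scale1r.
have x_t : x \in t by rewrite -(perm_mem eq_st) mem_head.
case/splitPr: x_t eq_st => t1 t2 eq_st.
have [k eq_k] : exists k, word_mx (t1 ++ t2) = (-1) ^+ k *: word_mx s.
  apply: IH; rewrite -(perm_cons x) (perm_trans eq_st) //.
  by rewrite -cat1s perm_catCA.
exists (count (predC1 x) t1 + k)%N.
rewrite word_mx_cat word_mx_cons mulrA mul_word_mx_g -scalemx_mull -mulrA -word_mx_cat eq_k.
by rewrite -scalemx_mulr scalerA -exprD word_mx_cons.
Qed.

Lemma mxtrace_word_mx_eq0 j w : odd (count (predC1 j) w) -> \tr (word_mx w) = 0.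
Proof.
move=> odd_count.
have tr_opp : \tr (word_mx w) = - \tr (word_mx w).
  rewrite -{1}[word_mx w]mul1r -(g_sqr j) -mulrA -!mulmxE mxtrace_mulC !mulmxE.
  rewrite mul_g_word_mx -scalemx_mull -mulrA g_sqr mulr1 mxtraceZ.
  by rewrite -signr_odd odd_count expr1 mulN1r.
have : \tr (word_mx w) *+ 2 == 0 by rewrite mulr2n {2}tr_opp addrN.
by rewrite mulrn_eq0 => /eqP.
Qed.

Lemma mxtrace_word_mx_cancel u y v t :
  \tr (word_mx (u ++ y :: v ++ y :: t)) = (-1) ^+ count (predC1 y) v * \tr (word_mx (v ++ t ++ u)).
Proof.
rewrite word_mx_cat -mulmxE mxtrace_mulC mulmxE -word_mx_cat cat_cons -catA cat_cons.
rewrite word_mx_cons !word_mx_cat word_mx_cons mulrA mul_g_word_mx -scalemx_mull.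
by rewrite -mulrA (mulrA (g y)) g_sqr mul1r mxtraceZ word_mx_cat.
Qed.

Hypothesis card_even : ~~ odd #|I|.

Lemma mxtrace_word_mx_map (f : I -> I) w : injective f -> \tr (word_mx (map f w)) = \tr (word_mx w).
Proof.
move=> f_inj; have [n le_w] := ubnP (size w); elim: n w le_w => // n IH w le_w.
case: (boolP [exists j, odd (count (predC1 j) w)]) => [/existsP[j odd_j]|/existsPn even_count].
  by rewrite (mxtrace_word_mx_eq0 odd_j) (@mxtrace_word_mx_eq0 (f j)) ?count_map_predC1.
have [uniq_w|/not_uniq_split[u [y [t [eq_w y_t]]]]] := boolP (uniq w).
  by rewrite (uniq_even_count_nil card_even uniq_w even_count).
case/splitPr: y_t eq_w => v t' -> in le_w *.
rewrite !map_cat /= map_cat /= !mxtrace_word_mx_cancel count_map_predC1 // -!map_cat IH //.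
by move: le_w; rewrite !size_cat /= size_cat /=; lia.
Qed.

End CliffordWords.

Lemma ker_geP k (T : eqType) (a : 'I_k -> T) (P : {set {set 'I_k}}) :
  reflect (forall B, B \in P -> {in B &, forall x y, a x = a y}) (ker_ge a P).
Proof.
apply: (iffP forall_inP) => [ker B B_P x y x_B y_B | ker B B_P].
  by move: (ker B B_P) => /forall_inP/(_ x x_B)/forall_inP/(_ y y_B)/eqP.
by apply/forall_inP => x x_B; apply/forall_inP => y y_B; apply/eqP; apply: (ker B).
Qed.

Lemma eq_ker_ge k (T U : eqType) (a : 'I_k -> T) (b : 'I_k -> U) (P : {set {set 'I_k}}) :
  (forall x y, (a x == a y) = (b x == b y)) -> ker_ge a P = ker_ge b P.
Proof.
move=> eq_ab; apply: eq_forallb_in => B _; apply: eq_forallb_in => x _.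
by apply: eq_forallb_in => y _; apply: eq_ab.
Qed.

Lemma prod_pair_partition_eq1 (R : comPzRingType) k (P : {set {set 'I_k}}) (F : 'I_k -> R) :
  pair_partition P -> (forall B, B \in P -> {in B &, forall x y, F x = F y}) ->
  (forall x, F x * F x = 1) -> \prod_(j < k) F j = 1.
Proof.
case/andP=> /and3P[/eqP cover_P triv_P _] /forall_inP pair_P F_blocks F_sqr.
rewrite (eq_bigl [in cover P]) => [|j]; last by rewrite cover_P inE.
rewrite big_trivIset //; apply: big1 => B B_P.
have /cards2P[x [y [neq_xy eq_B]]] := pair_P B B_P.
have x_B : x \in B by rewrite eq_B !inE eqxx.
rewrite (eq_bigr (fun=> F x)) => [|z z_B]; last exact: (F_blocks B B_P).
by rewrite prodr_const eq_B cards2 neq_xy expr2 F_sqr.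
Qed.

Lemma Psi_word n q (X : {set 'I_n}) : Psi q X = 'i ^+ q./2 *: word_mx (@psi n) (enum X).
Proof. by rewrite /Psi -mulmxE mul_mx_scalar. Qed.

(* The sign of sorting [map s (enum X)] increasingly, read off by comparing two
   words that agree up to sign. *)
Definition relabel_sign n (s : {perm 'I_n}) (X : {set 'I_n}) : algC :=
  if word_mx (@psi n) (enum (s @: X)) == word_mx (@psi n) (map s (enum X)) then 1 else -1.

Lemma relabel_sign_sqr n (s : {perm 'I_n}) X : relabel_sign s X * relabel_sign s X = 1.
Proof. by rewrite /relabel_sign; case: ifP; rewrite ?mulrNN mulr1. Qed.

Lemma word_psi_relabel n (s : {perm 'I_n}) (X : {set 'I_n}) : ~~ odd n ->
  word_mx (@psi n) (enum (s @: X)) = relabel_sign s X *: word_mx (@psi n) (map s (enum X)).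
Proof.
move=> n_even.
have sort_sX : perm_eq (map s (enum X)) (enum (s @: X)).
  apply: uniq_perm; rewrite ?(map_inj_uniq perm_inj) ?enum_uniq // => z.
  rewrite mem_enum; apply/mapP/imsetP => -[x x_X ->]; exists x => //.
    by rewrite -mem_enum.
  by rewrite mem_enum.
have [k eq_k] := word_mx_perm_eq (psi_anticomm n_even) sort_sX.
rewrite /relabel_sign eq_k -signr_odd; case: (odd k); last by rewrite expr0 scale1r eqxx scale1r.
by rewrite expr1; case: ifP => [/eqP ->|_]; rewrite ?scale1r.
Qed.

Lemma ntrZ m (x : algC) (A : 'M[algC]_(2 ^ m)) : ntr (x *: A) = x * ntr A.
Proof. by rewrite /ntr mxtraceZ mulrA. Qed.

Lemma trPsi_relabel n q k (P : {set {set 'I_k}}) (a : {ffun 'I_k -> {set 'I_n}}) (s : {perm 'I_n}) :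
  ~~ odd n -> pair_partition P -> ker_ge a P -> trPsi q [ffun j => s @: a j] = trPsi q a.
Proof.
move=> n_even pair_P /ker_geP a_blocks.
have signs1 : \prod_(j < k) relabel_sign s (a j) = 1.
  apply: (prod_pair_partition_eq1 pair_P) => [B B_P x y x_B y_B|x]; last exact: relabel_sign_sqr.
  by rewrite (a_blocks B B_P x y x_B y_B).
rewrite /trPsi; under eq_bigr => j _ do rewrite ffunE Psi_word word_psi_relabel // scalerA.
under [in RHS]eq_bigr => j _ do rewrite Psi_word.
rewrite !scalemx_prod !prod_word_mx (map_comp (map s) (fun j => enum (a j))) -map_flatten.
rewrite !ntrZ big_split /= signs1 mulr1 /ntr mxtrace_word_mx_map ?card_ord //.
- exact: psi_sqr.
- exact: psi_anticomm.
- exact: perm_inj.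
Qed.

Lemma exists_perm_imset (T : finType) (A B : {set T}) :
  #|A| = #|B| -> exists s : {perm T}, s @: A = B.
Proof.
move=> card_AB; pose r (C : {set T}) := enum C ++ enum (~: C).
have size_r C : size (r C) = #|T| by rewrite size_cat -!cardE cardsC.
have mem_r C x : x \in r C by rewrite mem_cat !mem_enum inE orbN.
have uniq_r C : uniq (r C).
  rewrite cat_uniq !enum_uniq /= andbT; apply/hasPn => x.
  by rewrite !mem_enum inE => /negbTE ->.
have index_lt C x : (index x (r A) < size (r C))%N by rewrite size_r -(size_r A) index_mem.
pose f x := nth x (r B) (index x (r A)).
have f_inj : injective f.
  move=> x y; rewrite /f (set_nth_default x y (index_lt B y)) => /eqP.
  rewrite nth_uniq // => /eqP eq_index.
  by rewrite -(nth_index x (mem_r A x)) eq_index nth_index.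
exists (perm f_inj); apply/eqP.
rewrite eqEcard card_imset ?card_AB ?leqnn ?andbT; last exact: perm_inj.
apply/subsetP => _ /imsetP[x x_A ->]; rewrite permE /f /r index_cat mem_enum x_A.
have lt_x : (index x (enum A) < size (enum B))%N.
  by rewrite -cardE -card_AB cardE index_mem mem_enum.
by rewrite nth_cat lt_x -mem_enum mem_nth.
Qed.

Definition fixed_block_sum n q k (P : {set {set 'I_k}}) (V : {set 'I_k}) (R : {set 'I_n}) : algC :=
  \sum_(a : {ffun 'I_k -> {set 'I_n}} |
          [&& [forall j, a j \in Iset n q], ker_ge a P & [forall x in V, a x == R]])
     trPsi q a.

Lemma fixed_block_sum_relabel n q k (P : {set {set 'I_k}}) V (R : {set 'I_n}) (s : {perm 'I_n}) :
  ~~ odd n -> pair_partition P -> fixed_block_sum q P V (s @: R) = fixed_block_sum q P V R.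
Proof.
move=> n_even pair_P.
pose relabel (t : {perm 'I_n}) (a : {ffun 'I_k -> {set 'I_n}}) : {ffun 'I_k -> {set 'I_n}} :=
  [ffun j => t @: a j].
have relabelK t : cancel (relabel t) (relabel (t^-1)%g).
  move=> a; apply/ffunP => j; rewrite !ffunE -imset_comp -[RHS]imset_id.
  by apply: eq_imset => z; rewrite /= permK.
rewrite /fixed_block_sum (reindex (relabel s)) /=; last first.
  apply: onW_bij; exists (relabel (s^-1)%g) => a; first exact: relabelK.
  by rewrite -{1}[s]invgK relabelK.
have eq_im (X Y : {set 'I_n}) : (s @: X == s @: Y) = (X == Y).
  by rewrite (inj_eq (@imset_inj _ _ s _)) //; apply: perm_inj.
have ker_relabel a : ker_ge (relabel s a) P = ker_ge a P.
  by apply: eq_ker_ge => x y; rewrite !ffunE eq_im.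
apply: eq_big => [a|a /and3P[_]].
  congr [&& _, _ & _].
  - by apply: eq_forallb => j; rewrite ffunE !inE card_imset //; apply: perm_inj.
  - exact: ker_relabel.
  - by apply: eq_forallb_in => x _; rewrite ffunE eq_im.
by rewrite ker_relabel => ker_a _; apply: (trPsi_relabel _ _ n_even pair_P ker_a).
Qed.

Lemma fixed_block_sum_eq n q k (P : {set {set 'I_k}}) V (R R' : {set 'I_n}) :
  ~~ odd n -> pair_partition P -> R \in Iset n q -> R' \in Iset n q ->
  fixed_block_sum q P V R' = fixed_block_sum q P V R.
Proof.
move=> n_even pair_P; rewrite !inE => /eqP card_R /eqP card_R'.
have [s <-] := exists_perm_imset (etrans card_R (esym card_R')).
exact: fixed_block_sum_relabel.
Qed.

Lemma sum_ker_ge_fixed_block n q k (P : {set {set 'I_k}}) V (v0 : 'I_k) : V \in P -> v0 \in V ->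
  \sum_(a : {ffun 'I_k -> {set 'I_n}} | [forall j, a j \in Iset n q] && ker_ge a P) trPsi q a
  = \sum_(R in Iset n q) fixed_block_sum q P V R.
Proof.
move=> V_P v0_V.
rewrite (partition_big (fun a : {ffun 'I_k -> {set 'I_n}} => a v0) (mem (Iset n q))); last first.
  by move=> a /andP[/forallP/(_ v0)].
apply: eq_bigr => R _; apply: eq_bigl => a; rewrite andbA.
case: (boolP (ker_ge a P)) => [/ker_geP ker_a|_]; last by rewrite !andbF.
rewrite !andbT; congr (_ && _).
apply/eqP/forall_inP => [<- x x_V|fixed_V]; last exact/eqP/fixed_V.
by rewrite (ker_a V V_P x v0 x_V v0_V).
Qed.

Unset Implicit Arguments.

Theorem lemma3p4 (n q k : nat) (P : {set {set 'I_k}}) (V : {set 'I_k})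
    (R : {set 'I_n}) :
  ~~ odd n -> (1 <= q <= n./2)%N ->
  pair_partition P -> V \in P -> R \in Iset n q ->
  ((#|Iset n q|%:R : algC) ^+ (k - 2)./2)^-1 *
  \sum_(a : {ffun 'I_k -> {set 'I_n}} |
          [&& [forall j, a j \in Iset n q], ker_ge a P & [forall x in V, a x == R]])
     trPsi q a
  = S n q P.
Proof.
move=> n_even _ pair_P V_P R_I.
have card_V : #|V| = 2%N by case/andP: pair_P => _ /forall_inP/(_ V V_P)/eqP.
have [v0 v0_V] : exists v0, v0 \in V by apply/set0Pn; rewrite -card_gt0 card_V.
have k_ge2 : (2 <= k)%N by rewrite -card_V -[X in (_ <= X)%N](card_ord k) max_card.
have I_neq0 : (#|Iset n q|%:R : algC) != 0.
  by rewrite pnatr_eq0 -lt0n card_gt0; apply/set0Pn; exists R.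
rewrite /S (sum_ker_ge_fixed_block _ _ V_P v0_V) -/(fixed_block_sum q P V R).
rewrite (eq_bigr (fun=> fixed_block_sum q P V R)) => [|R' R'_I]; last exact: fixed_block_sum_eq.
have -> : k./2 = ((k - 2)./2).+1 by lia.
by rewrite sumr_const -[fixed_block_sum _ _ _ _ *+ _]mulr_natl exprS invfM mulrACA mulVf // mul1r.
Qed.
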